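(* Fix a positive integer $t$, a constant $c_0>0$, and sequences $(\lambda_n)$, $(\mu_n)$ of positive reals tending to infinity. Then for all sufficiently large $n$ the following holds. Let $G$ be a bipartite graph on $n$ vertices with no copy of $\theta_{3,t}[2]$; $x_1,x_2$ distinct vertices; $S\subset N(x_1,x_2)$ with $s:=|S|\ge n^{1/3}$; $\lambda=\lambda_n$, $\mu=\mu_n$; $\mathcal{Q}$ a set of $q\ge c_0\frac{s^2n^{2/3}\lambda^{27/10}}{\mu^{11/10}}$ ordered tuples $(y_1,y_2,z_1,z_2)\in V(G)^4$ each satisfying (P1) $y_1,y_2\in S$ and $y_iz_j\in E(G)$ for all $i,j\in\{1,2\}$, (P2) $x_1,x_2,y_1,y_2,z_1,z_2$ distinct, (P3) $d_S(z_1),d_S(z_2)\le\lambda s/n^{1/3}$, (P4) $d(x_1,x_2,z_1,z_2)<6t$, (P5) $\mu n^{1/3}\le d(z_1,z_2)\le2\mu n^{1/3}$; and $\mathcal{A}$ a set of tuples $(y_1,y_2,z_1,z_2,w_1,w_2,y_2',z_1',z_2')\in V(G)^9$ each satisfying (a) $(y_1,y_2,z_1,z_2),(y_1,y_2',z_1',z_2')\in\mathcal{Q}$, (b) $w_1,w_2\in N(z_1,z_2,z_1',z_2')$, (c) $d(y_1,y_2,w_1,w_2)<6t$ and $d(y_1,y_2',w_1,w_2)<6t$, (d) $x_1,x_2,y_1,y_2,z_1,z_2,w_1,w_2,y_2',z_1',z_2'$ all distinct. Let $\mathcal{A}'$ be the set of tuples in $\mathcal{A}$ with $d(z_1,z_1',z_2')<\mu^{7/5}n^{1/6}$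 and $d(z_2,z_1',z_2')<\mu^{7/5}n^{1/6}$. Then for any fixed vertices $y_1,y_2,y_2',z_1',z_2'$, the number of $(z_1,z_2,w_1,w_2)\in V(G)^4$ with $(y_1,y_2,z_1,z_2,w_1,w_2,y_2',z_1',z_2')\in\mathcal{A}'$ is at most $g:=10^8t^3\mu^{14/5}n^{1/3}$.
   Context: $N(v_1,\dots,v_k)$ is the common neighbourhood of $v_1,\dots,v_k$, $d(v_1,\dots,v_k)=|N(v_1,\dots,v_k)|$, and $d_S(v)=|N(v)\cap S|$. $\theta_{3,t}$ is the union of $t$ paths of length $3$ sharing the same two endpoints and pairwise internally vertex-disjoint; $F[2]$ is obtained from $F$ by replacing each vertex by an independent set of size $2$ and each edge by a copy of $K_{2,2}$. *)

From HB Require Import structures.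
From mathcomp Require Import all_boot all_order all_algebra.
From mathcomp Require Import all_classical all_reals all_analysis.
Set Implicit Arguments. Unset Strict Implicit. Unset Printing Implicit Defensive.
Import Order.TTheory GRing.Theory Num.Theory.

Definition simple_graph (T : finType) (e : rel T) : Prop :=
  (forall x y, e x y = e y x) /\ (forall x, ~~ e x x).

Definition bipartite (T : finType) (e : rel T) : Prop :=
  exists f : T -> bool, forall x y, e x y -> f x != f y.

Definition has_copy (H : finType) (eH : rel H) (T : finType) (e : rel T) : Prop :=
  exists f : H -> T, injective f /\ forall a b, eH a b -> e (f a) (f b).

(* theta_{3,t}: vertices inl false = endpoint a, inl true = endpoint b,
   inr (i, false), inr (i, true) = the two internal vertices of path i,
   path i being a - (i,false) - (i,true) - b. *)
Definition theta_V (t : nat) : finType := (bool + ('I_t * bool))%type.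

Definition theta_adj0 (t : nat) (u v : theta_V t) : bool :=
  match u, v with
  | inl false, inr (_, false) => true
  | inr (i, false), inr (j, true) => i == j
  | inr (_, true), inl true => true
  | _, _ => false
  end.

Definition theta_adj (t : nat) : rel (theta_V t) :=
  fun u v => theta_adj0 u v || theta_adj0 v u.

(* F[2]: blow up each vertex into an independent pair, each edge into K_{2,2}. *)
Definition blowup2 (V : finType) (eF : rel V) : rel (V * bool)%type :=
  fun u v => eF u.1 v.1.

Definition theta32_free (t : nat) (T : finType) (e : rel T) : Prop :=
  ~ has_copy (blowup2 (@theta_adj t)) e.

Definition cnbh (T : finType) (e : rel T) (vs : seq T) : {set T} :=
  [set u | all (fun v => e v u) vs].

Definition cdeg (T : finType) (e : rel T) (vs : seq T) : nat := #|cnbh e vs|.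

Definition degS (T : finType) (e : rel T) (S : {set T}) (v : T) : nat :=
  #|[set u in S | e v u]|.

From HB Require Import structures.
From mathcomp Require Import all_boot all_order all_algebra.
From mathcomp Require Import all_classical all_reals all_analysis.
From mathcomp Require Import zify ring lra.
Import Order.TTheory GRing.Theory Num.Theory.
Import numFieldNormedType.Exports.
Set Implicit Arguments. Unset Strict Implicit. Unset Printing Implicit Defensive.

(* Every counted (z1, z2, w1, w2) yields a path
   {y1,y2} - {z1,z2} - {w1,w2} - {z1',z2'} of copies of K_{2,2}, that is, one
   of the t paths of theta_{3,t}[2] with end pairs {y1,y2} and {z1',z2'}.  So no
   t counted tuples are vertex-disjoint, and the vertices of a maximal
   vertex-disjoint family form a set U of at most 4(t-1) vertices meeting every
   counted tuple.  Through a fixed u in U there are few tuples: if u is z1 or z2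
   then w1, w2 lie in N(u, z1', z2'), of size < mu^{7/5} n^{1/6}; if u is w1 or
   w2 then the other w lies in N(z1', z2'), of size <= 2 mu n^{1/3}; and in both
   cases z1, z2 lie in N(y1, y2, w1, w2), of size < 6t. *)

Lemma leq_card_bigcup (I T : finType) (P : {pred I}) (A : I -> {set T}) :
  #|\bigcup_(i in P) A i| <= \sum_(i in P) #|A i|.
Proof.
apply: (big_ind2 (fun (X : {set T}) n => #|X| <= n)) => [|X m Y n leXm leYn|//].
  by rewrite cards0.
exact: leq_trans (leq_card_setU X Y).1 (leq_add leXm leYn).
Qed.

Lemma leq_card_cover_sum (I T : finType) (U : {set I}) (C : {set T})
    (P : I -> T -> bool) :
  {in C, forall x, exists2 u, u \in U & P u x} ->
  #|C| <= \sum_(u in U) #|[set x in C | P u x]|.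
Proof.
move=> C_covered; apply: leq_trans (leq_card_bigcup _ _).
apply/subset_leq_card/fintype.subsetP => x xC; have [u uU Pux] := C_covered x xC.
by apply/bigcupP; exists u; rewrite // inE xC.
Qed.

Lemma leq_card_fibres (aT rT : finType) (f : aT -> rT) (D : {set aT})
    (B : {set rT}) k :
  {in D, forall x, f x \in B} ->
  {in B, forall y, #|[set x in D | f x == y]| <= k} ->
  #|D| <= #|B| * k.
Proof.
move=> fDB fibre_le; rewrite -sum_nat_const.
have fibres_cover : {in D, forall x, exists2 y, y \in B & f x == y}.
  by move=> x /fDB; exists (f x).
apply: leq_trans (leq_card_cover_sum fibres_cover) _.
exact: leq_sum fibre_le.
Qed.

Lemma leq_card_quads (T : finType) (D : {set T * T * T * T}) (B : {set T * T})
    (Z : T -> T -> {set T}) k :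
  (forall z1 z2 w1 w2, (z1, z2, w1, w2) \in D ->
     [/\ (w1, w2) \in B, z1 \in Z w1 w2, z2 \in Z w1 w2 & #|Z w1 w2| <= k]) ->
  #|D| <= #|B| * k ^ 2.
Proof.
move=> D_prop; apply: (leq_card_fibres (f := fun p => (p.1.2, p.2))).
  by move=> [[[z1 z2] w1] w2] /D_prop[].
move=> [w1 w2] _; set F := [set x in D | _].
have [->|[[[[z1 z2] w1'] w2'] pF]] := set_0Vmem F; first by rewrite cards0.
have Zk : #|Z w1 w2| <= k.
  by move: pF; rewrite inE => /andP[+ /eqP[<- <-]] => /D_prop[].
have F_sub : F \subset [set (z.1, z.2, w1, w2) | z in finset.setX (Z w1 w2) (Z w1 w2)].
  apply/fintype.subsetP => -[[[z1' z2'] w1''] w2'']; rewrite inE => /andP[+ /eqP[<- <-]].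
  by move=> /D_prop[_ Zz1 Zz2 _]; apply/imsetP; exists (z1', z2'); rewrite ?inE ?Zz1.
apply: leq_trans (subset_leq_card F_sub) _; apply: leq_trans (leq_imset_card _ _) _.
by rewrite cardsX leq_mul.
Qed.

Section DisjointFamily.

Variables (I T : finType) (vs : I -> seq T).

Definition disjoint_family (F : {set I}) : bool :=
  [forall p in F, forall q in F, (p != q) ==> [disjoint vs p & vs q]].

Lemma disjoint_familyP (F : {set I}) :
  reflect {in F &, forall p q, p != q -> [disjoint vs p & vs q]}
          (disjoint_family F).
Proof.
apply: (iffP forall_inP) => [F_disj p q pF qF | F_disj p pF].
  by move/forall_inP/(_ q qF)/implyP: (F_disj p pF).
by apply/forall_inP => q qF; apply/implyP; apply: F_disj.
Qed.

Lemma disjoint_family_or_transversal (P : {set I}) r k :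
  {in P, forall p, 0 < size (vs p) <= r} ->
  (exists2 F : {set I}, F \subset P & (k < #|F|) && disjoint_family F)
  \/ (exists2 U : {set T}, #|U| <= r * k
        & {in P, forall p, exists2 u, u \in U & u \in vs p}).
Proof.
move=> vs_size.
pose admissible (F : {set I}) := (F \subset P) && disjoint_family F.
have [|F /maxsetP[/andP[FP F_disj] F_max]] := @ex_maxset _ admissible.
  by exists finset.set0; rewrite /admissible finset.sub0set; apply/disjoint_familyP => p; rewrite inE.
have [ltkF|leFk] := ltnP k #|F|; first by left; exists F; rewrite ?ltkF.
right; set U := \bigcup_(p in F) [set x in vs p].
have vs_sub_U q : q \in F -> vs q \subset U.
  by move=> qF; apply/fintype.subsetP => x xq; apply/bigcupP; exists q; rewrite ?inE.
exists U.
  apply: leq_trans (leq_card_bigcup _ _) _.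
  have card_vs_le p : p \in F -> #|[set x in vs p]| <= r.
    move=> pF; rewrite cardsE (leq_trans (card_size _)) //.
    by case/andP: (vs_size p (fintype.subsetP FP p pF)).
  apply: (@leq_trans (\sum_(p in F) r)); first exact: leq_sum.
  by rewrite sum_nat_const mulnC leq_mul2l leFk orbT.
move=> p pP; apply/exists_inP; apply: contraT; rewrite negb_exists_in.
move=> /forall_inP U_miss; have p_miss : [disjoint vs p & U].
  by rewrite disjoint_has; apply/hasPn => y; apply: contraL; apply: U_miss.
have [x xp] : exists x, x \in vs p.
  by case: (vs p) (vs_size p pP) => // x s _; exists x; rewrite inE eqxx.
have pF : p \notin F.
  by apply/negP => /vs_sub_U/fintype.subsetP/(_ x xp); rewrite (disjointFr p_miss xp).
have pF_F : p |: F = F.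
  apply: F_max; last exact: finset.subsetUr.
  rewrite /admissible finset.subUset finset.sub1set pP FP; apply/disjoint_familyP.
  have disj_p q : q \in F -> [disjoint vs p & vs q].
    by move=> qF; apply: disjointWr (vs_sub_U q qF) p_miss.
  move=> q q' /setU1P[->|qF] /setU1P[->|q'F]; rewrite ?eqxx // => neq_qq'.
  - exact: disj_p.
  - by rewrite disjoint_sym; apply: disj_p.
  - by move/disjoint_familyP: F_disj; apply.
by move: pF; rewrite -pF_F setU11.
Qed.

End DisjointFamily.

Definition sel (T : Type) (b : bool) (p : T * T) : T := if b then p.2 else p.1.

Definition pair_seq (T : Type) (p : T * T) : seq T := [:: p.1; p.2].

Lemma mem_sel (T : eqType) b (p : T * T) : sel b p \in pair_seq p.
Proof. by case: b; rewrite !inE eqxx ?orbT. Qed.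

Definition biclique (T : Type) (e : rel T) (p q : T * T) : Prop :=
  forall b b', e (sel b p) (sel b' q).

Lemma biclique_sym (T : Type) (e : rel T) p q :
  (forall x y, e x y = e y x) -> biclique e p q -> biclique e q p.
Proof. by move=> e_sym pq b b'; rewrite e_sym. Qed.

Definition blown_path (T : eqType) (e : rel T) (a p q b : T * T) : Prop :=
  [/\ uniq (flatten (map (@pair_seq T) [:: a; p; q; b])),
      biclique e a p, biclique e p q & biclique e q b].

Section ThetaBlowup.

Variables (T : finType) (e : rel T) (t : nat) (a b : T * T) (zs ws : 'I_t -> T * T).
Hypothesis e_sym : forall x y, e x y = e y x.
Hypothesis t_gt0 : 0 < t.
Hypothesis paths : forall i, blown_path e a (zs i) (ws i) b.
Hypothesis paths_disjoint : forall i j, i != j ->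
  [disjoint pair_seq (zs i) ++ pair_seq (ws i) & pair_seq (zs j) ++ pair_seq (ws j)].

Definition theta_pair (x : theta_V t) : T * T :=
  match x with
  | inl c => if c then b else a
  | inr (i, c) => if c then ws i else zs i
  end.

(* Listed level by level (a, zs i, ws i, b), the pairs of the i-th path form a
   duplicate-free list of 8 vertices in which vertex c of the pair of x sits at
   slot 2 * theta_level x + c; injectivity of the embedding reduces to this. *)
Definition theta_level (x : theta_V t) : nat :=
  match x with
  | inl c => if c then 3 else 0
  | inr (_, c) => if c then 2 else 1
  end.

Definition on_path (i : 'I_t) (x : theta_V t) : bool :=
  if x is inr (j, _) then j == i else true.

Lemma theta_pair_nth i x c : on_path i x ->
  sel c (theta_pair x) = nth a.1 (flatten (map (@pair_seq T) [:: a; zs i; ws i; b]))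
                             (2 * theta_level x + c).
Proof. by case: x => [[]|[j []]] /= => [_|_|/eqP->|/eqP->]; case: c. Qed.

Lemma theta_level_inj i x y : on_path i x -> on_path i y ->
  theta_level x = theta_level y -> x = y.
Proof. by case: x y => [[]|[j []]] [[]|[k []]] //= /eqP-> /eqP->. Qed.

Lemma theta_pair_biclique x y :
  theta_adj x y -> biclique e (theta_pair x) (theta_pair y).
Proof.
have adj0 u v : theta_adj0 u v -> biclique e (theta_pair u) (theta_pair v).
  case: u v => [[]|[i []]] [[]|[j []]] //= => [_|_|/eqP<-].
  - by case: (paths j).
  - by case: (paths i).
  - by case: (paths i).
by case/orP => [/adj0 | /adj0 /biclique_sym]; apply.
Qed.

Lemma theta_blowup_copy : has_copy (blowup2 (@theta_adj t)) e.
Proof.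
exists (fun u => sel u.2 (theta_pair u.1)); split; last first.
  by move=> [x c] [y c'] /theta_pair_biclique.
move=> [x c] [y c'] /= same.
have on_own_path k d d' : sel d (theta_pair (inr (k, d'))) \in pair_seq (zs k) ++ pair_seq (ws k).
  by case: d'; rewrite mem_cat mem_sel ?orbT.
have [i xi yi] : exists2 i, on_path i x & on_path i y.
  case: x y same => [cx|[i cx]] [cy|[j cy]] same.
  - by exists (Ordinal t_gt0).
  - by exists j; rewrite //= eqxx.
  - by exists i; rewrite //= eqxx.
  exists i; rewrite //= ?eqxx //; have [//|neq_ji] := eqVneq j i.
  have := disjointFr (paths_disjoint neq_ji) (on_own_path j c' cy).
  by rewrite -same on_own_path.
have [uniq_i _ _ _] := paths i.
have level_lt z : theta_level z < 4 by case: z => [[]|[? []]].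
move: same; rewrite (theta_pair_nth c xi) (theta_pair_nth c' yi).
move/eqP; rewrite nth_uniq //; last 2 first.
- by have := level_lt x; case: c; rewrite /=; lia.
- by have := level_lt y; case: c'; rewrite /=; lia.
move/eqP => same_idx.
have same_level : theta_level x = theta_level y by case: c c' same_idx => [] []; lia.
have -> : c = c' by case: c c' same_idx => [] []; lia.
by rewrite (theta_level_inj xi yi same_level).
Qed.

End ThetaBlowup.

Local Open Scope ring_scope.

Definition quad_seq (T : Type) (p : T * T * T * T) : seq T :=
  pair_seq p.1.1 ++ pair_seq (p.1.2, p.2).

Lemma pair_seqP (T : eqType) (u : T) p : u \in pair_seq p -> exists c, u = sel c p.
Proof. by rewrite !inE => /orP[]/eqP->; [exists false | exists true]. Qed.

Lemma blown_path_cnbh (T : finType) (e : rel T) (a p q b : T * T) :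
  (forall x y, e x y = e y x) -> blown_path e a p q b ->
  forall c c', sel c p \in cnbh e (pair_seq a ++ pair_seq q)
            /\ sel c q \in cnbh e (sel c' p :: pair_seq b).
Proof.
move=> e_sym [_ ap pq qb] c c'; rewrite !inE /= !andbT.
rewrite (e_sym q.1) (e_sym q.2) (e_sym b.1) (e_sym b.2).
by rewrite (ap false) (ap true) (pq c false) (pq c true) (pq c' c) (qb c false) (qb c true).
Qed.

Section ThetaFreeCount.

Variables (R : realType) (T : finType) (e : rel T) (t : nat).
Variables (y1 y2 b1 b2 : T) (C : {set T * T * T * T}) (Mz Mw : R).
Hypothesis e_sym : forall x y, e x y = e y x.
Hypothesis t_gt0 : (0 < t)%N.
Hypothesis free : theta32_free t e.
Hypothesis Mw_ge0 : 0 <= Mw.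
Hypothesis C_spec : forall z1 z2 w1 w2, (z1, z2, w1, w2) \in C ->
  [/\ blown_path e (y1, y2) (z1, z2) (w1, w2) (b1, b2),
      (cdeg e [:: y1; y2; w1; w2] < 6 * t)%N,
      (cdeg e [:: z1; b1; b2])%:R <= Mz /\ (cdeg e [:: z2; b1; b2])%:R <= Mz
    & (cdeg e [:: b1; b2])%:R <= Mw].

Lemma theta_free_transversal :
  exists2 U : {set T}, (#|U| <= 4 * t.-1)%N
    & {in C, forall p, exists2 u, u \in U & u \in quad_seq p}.
Proof.
have [[F FC /andP[ltF F_disj]]|//] :=
  @disjoint_family_or_transversal _ _ (@quad_seq T) C 4 t.-1 (fun p _ => erefl).
exfalso; apply: free; rewrite prednK // in ltF.
pose blk (i : 'I_t) := enum_val (widen_ord ltF i).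
have blkC i : blk i \in C by apply: (fintype.subsetP FC); apply: enum_valP.
apply: (@theta_blowup_copy _ _ _ (y1, y2) (b1, b2) (fun i => (blk i).1.1)
          (fun i => ((blk i).1.2, (blk i).2)) e_sym t_gt0).
  by move=> i; case: (blk i) (blkC i) => [[[z1 z2] w1] w2] /C_spec[].
move=> i j neq_ij; move/disjoint_familyP: F_disj; apply; try exact: enum_valP.
by apply: contra neq_ij => /eqP/enum_val_inj/(congr1 val) /= /val_inj ->.
Qed.

Lemma card_through_z_le u :
  #|[set p in C | u \in pair_seq p.1.1]|%:R <= Mz ^+ 2 * ((6 * t) ^ 2)%:R.
Proof.
set D := [set p in C | _].
have [->|[[[[z1 z2] w1] w2] pD]] := set_0Vmem D.
  by rewrite cards0 mulr_ge0 ?sqr_ge0.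
have Nu_le : #|cnbh e [:: u; b1; b2]|%:R <= Mz.
  by move: pD; rewrite inE => /andP[/C_spec[_ _ [? ?] _] /pair_seqP[[] ->]].
have : (#|D| <= #|finset.setX (cnbh e [:: u; b1; b2]) (cnbh e [:: u; b1; b2])| * (6 * t) ^ 2)%N.
  apply: (leq_card_quads (Z := fun w1 w2 => cnbh e [:: y1; y2; w1; w2])).
  move=> z1' z2' w1' w2'; rewrite inE => /andP[/C_spec[path cd _ _] /pair_seqP[c ->]].
  have [z1N w1N] := blown_path_cnbh e_sym path false c.
  have [z2N w2N] := blown_path_cnbh e_sym path true c.
  by split => //; [rewrite inE /= w1N | exact: ltnW cd].
rewrite cardsX -(ler_nat R) !natrM => /le_trans; apply.
apply: ler_wpM2r => //; rewrite expr2.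
by apply: ler_pM.
Qed.

Lemma card_through_w_le u :
  #|[set p in C | u \in pair_seq (p.1.2, p.2)]|%:R <= 2 * Mw * ((6 * t) ^ 2)%:R.
Proof.
set D := [set p in C | _]; set W := cnbh e [:: b1; b2].
have [->|[[[[z1 z2] w1] w2] pD]] := set_0Vmem D.
  by rewrite cards0 !mulr_ge0.
have W_le : #|W|%:R <= Mw by move: pD; rewrite inE => /andP[/C_spec[]].
set B := finset.setX [set u] W :|: finset.setX W [set u].
have : (#|D| <= #|B| * (6 * t) ^ 2)%N.
  apply: (leq_card_quads (Z := fun w1 w2 => cnbh e [:: y1; y2; w1; w2])).
  move=> z1' z2' w1' w2'; rewrite inE => /andP[/C_spec[path cd _ _] u_w].
  have [z1N w1N] := blown_path_cnbh e_sym path false false.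
  have [z2N w2N] := blown_path_cnbh e_sym path true false.
  split => //; last exact: ltnW cd.
  move: w1N w2N; rewrite !inE /= => /and3P[_ w1b1 w1b2] /and3P[_ w2b1 w2b2].
  by case/pair_seqP: u_w => -[] ->; rewrite /= eqxx ?w1b1 ?w1b2 ?w2b1 ?w2b2 ?orbT.
have card_B : (#|B| <= #|W| + #|W|)%N.
  by apply: leq_trans (leq_card_setU _ _).1 _; rewrite !cardsX cards1 mul1n muln1.
move/leq_trans/(_ (leq_mul card_B (leqnn _))).
rewrite -(ler_nat R) natrM natrD => /le_trans; apply.
by apply: ler_wpM2r => //; lra.
Qed.

Lemma card_theta_free_le :
  #|C|%:R <= (4 * t.-1)%:R * ((Mz ^+ 2 + 2 * Mw) * ((6 * t) ^ 2)%:R).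
Proof.
have [U le_U U_hits] := theta_free_transversal.
apply: (@le_trans _ _ (\sum_(u in U) #|[set p in C | u \in quad_seq p]|)%N%:R).
  by rewrite ler_nat; apply: leq_card_cover_sum.
rewrite natr_sum.
apply: (@le_trans _ _ (\sum_(u in U) ((Mz ^+ 2 + 2 * Mw) * ((6 * t) ^ 2)%:R))).
  apply: ler_sum => u _.
  have -> : [set p in C | u \in quad_seq p] =
      [set p in C | u \in pair_seq p.1.1] :|: [set p in C | u \in pair_seq (p.1.2, p.2)].
    by apply/finset.setP => p; rewrite !inE -andb_orr -!orbA.
  apply: le_trans (_ : _ <= (#|[set p in C | u \in pair_seq p.1.1]|
                            + #|[set p in C | u \in pair_seq (p.1.2, p.2)]|)%N%:R) _.
    by rewrite ler_nat; exact: (leq_card_setU _ _).1.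
  by rewrite natrD mulrDl lerD ?card_through_z_le ?card_through_w_le.
rewrite sumr_const -[_ *+ #|U|]mulr_natl; apply: ler_wpM2r.
  by rewrite mulr_ge0 ?addr_ge0 ?sqr_ge0 ?mulr_ge0.
by rewrite ler_nat.
Qed.

End ThetaFreeCount.

Lemma powR_sqr (R : realType) (x a : R) : 0 <= x -> (x `^ a) ^+ 2 = x `^ (a * 2).
Proof. by move=> x_ge0; rewrite -powR_mulrn ?powR_ge0 // -powRrM. Qed.

Lemma theta_count_le_g (R : realType) (t : nat) (m n : R) : 1 <= m -> 0 <= n ->
  (4 * t.-1)%:R * (((m `^ (7 / 5) * n `^ (6^-1)) ^+ 2 + 2 * (2 * m * n `^ (3^-1)))
                   * ((6 * t) ^ 2)%:R)
  <= 10 ^+ 8 * t%:R ^+ 3 * m `^ (14 / 5) * n `^ (3^-1).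
Proof.
move=> m_ge1 n_ge0; have m_ge0 : 0 <= m by lra.
have -> : (m `^ (7 / 5) * n `^ (6^-1)) ^+ 2 = m `^ (14 / 5) * n `^ (3^-1).
  by rewrite exprMn !powR_sqr //; congr (_ `^ _ * _ `^ _); field.
have m_le : m <= m `^ (14 / 5).
  by rewrite -{1}(powRr1 m_ge0) ler_powR //; lra.
set P := m `^ (14 / 5) * n `^ (3^-1); set q := m * n `^ (3^-1).
have q_le : q <= P by apply: ler_wpM2r; rewrite ?powR_ge0.
have q_ge0 : 0 <= q by rewrite mulr_ge0 ?powR_ge0.
have t1_le : (4 * t.-1)%:R <= 4 * t%:R :> R by rewrite -natrM ler_nat leq_mul2l leq_pred orbT.
have -> : 2 * m * n `^ (3^-1) = 2 * q by rewrite /q mulrA.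
rewrite natrX (natrM _ 6).
apply: le_trans (_ : 4 * t%:R * ((P + 2 * (2 * q)) * (6 * t%:R) ^+ 2) <= _).
  apply: ler_wpM2r => //; rewrite mulr_ge0 ?sqr_ge0 //; lra.
have -> : 10 ^+ 8 * t%:R ^+ 3 * m `^ (14 / 5) * n `^ (3^-1) = (10 ^+ 8 * P) * t%:R ^+ 3.
  by rewrite /P; ring.
have -> : 4 * t%:R * ((P + 2 * (2 * q)) * (6 * t%:R) ^+ 2) = (144 * (P + 4 * q)) * (t%:R ^+ 3).
  by ring.
apply: ler_wpM2r; first exact: exprn_ge0.
have ten8 : 720 <= 10 ^+ 8 :> R.
  apply: le_trans (_ : 10 ^+ 3 <= _); first by rewrite !exprS expr0; lra.
  by rewrite ler_eXn2l //; lra.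
apply: le_trans (_ : 720 * P <= _); first lra.
by apply: ler_wpM2r => //; apply: le_trans q_le.
Qed.

Unset Implicit Arguments.

Theorem mainTheorem13 (R : realType) (t : nat) (c0 : R)
  (lam mu : nat -> R) :
  (0 < t)%N -> 0 < c0 ->
  (forall n, 0 < lam n) -> (forall n, 0 < mu n) ->
  (lam @ \oo --> +oo)%classic -> (mu @ \oo --> +oo)%classic ->
  exists N : nat, forall n : nat, (N <= n)%N ->
  forall (T : finType) (e : rel T),
  #|T| = n -> simple_graph e -> bipartite e -> theta32_free t e ->
  forall (x1 x2 : T) (S : {set T}),
  x1 != x2 -> S \subset cnbh e [:: x1; x2] ->
  let s := #|S| in
  let nR : R := n%:R in
  let l := lam n in
  let m := mu n in
  (nR `^ (3^-1) <= s%:R) ->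
  forall Q : {set T * T * T * T},
  (c0 * s%:R ^+ 2 * nR `^ (2 / 3) * l `^ (27 / 10) / m `^ (11 / 10)
     <= #|Q|%:R) ->
  (forall y1 y2 z1 z2, (y1, y2, z1, z2) \in Q ->
     [/\ [&& y1 \in S, y2 \in S, e y1 z1, e y1 z2, e y2 z1 & e y2 z2],
         uniq [:: x1; x2; y1; y2; z1; z2],
         (degS e S z1)%:R <= l * s%:R / nR `^ (3^-1) /\
         (degS e S z2)%:R <= l * s%:R / nR `^ (3^-1),
         (cdeg e [:: x1; x2; z1; z2] < 6 * t)%N &
         m * nR `^ (3^-1) <= (cdeg e [:: z1; z2])%:R /\
         (cdeg e [:: z1; z2])%:R <= 2 * m * nR `^ (3^-1)]) ->
  forall A : T -> T -> T -> T -> T -> T -> T -> T -> T -> bool,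
  (forall y1 y2 z1 z2 w1 w2 y2' z1' z2',
     A y1 y2 z1 z2 w1 w2 y2' z1' z2' ->
     [/\ (y1, y2, z1, z2) \in Q /\ (y1, y2', z1', z2') \in Q,
         w1 \in cnbh e [:: z1; z2; z1'; z2'] /\
         w2 \in cnbh e [:: z1; z2; z1'; z2'],
         (cdeg e [:: y1; y2; w1; w2] < 6 * t)%N /\
         (cdeg e [:: y1; y2'; w1; w2] < 6 * t)%N &
         uniq [:: x1; x2; y1; y2; z1; z2; w1; w2; y2'; z1'; z2']]) ->
  let A' := fun y1 y2 z1 z2 w1 w2 y2' z1' z2' =>
     [&& A y1 y2 z1 z2 w1 w2 y2' z1' z2',
         (cdeg e [:: z1; z1'; z2'])%:R < m `^ (7 / 5) * nR `^ (6^-1)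
       & (cdeg e [:: z2; z1'; z2'])%:R < m `^ (7 / 5) * nR `^ (6^-1)] in
  forall y1 y2 y2' z1' z2' : T,
  (#|[set p : T * T * T * T |
       let: (z1, z2, w1, w2) := p in A' y1 y2 z1 z2 w1 w2 y2' z1' z2']|%:R
   <= 10 ^+ 8 * t%:R ^+ 3 * m `^ (14 / 5) * nR `^ (3^-1) :> R).
Proof.
move=> t_gt0 _ _ _ _ mu_oo.
have [N _ mu_ge1] : (\forall n \near \oo, 1 <= mu n)%classic.
  by move/cvgryPge: mu_oo; apply.
exists N => n /mu_ge1 m_ge1 T e _ [e_sym _] _ free x1 x2 S _ _ s nR l m _ Q _ Q_prop
  A A_prop A' y1 y2 y2' z1' z2'.
set C := [set p | _].
have C_spec z1 z2 w1 w2 : (z1, z2, w1, w2) \in C ->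
  [/\ blown_path e (y1, y2) (z1, z2) (w1, w2) (z1', z2'),
      (cdeg e [:: y1; y2; w1; w2] < 6 * t)%N,
      (cdeg e [:: z1; z1'; z2'])%:R <= m `^ (7 / 5) * nR `^ (6^-1)
      /\ (cdeg e [:: z2; z1'; z2'])%:R <= m `^ (7 / 5) * nR `^ (6^-1)
    & (cdeg e [:: z1'; z2'])%:R <= 2 * m * nR `^ (3^-1)].
  rewrite inE => /and3P[/A_prop[[Q1 Q2] [w1N w2N] [codeg _] uniq11] lt1 lt2].
  have [/and3P[_ _ /and4P[e11 e12 e21 e22]] _ _ _ _] := Q_prop _ _ _ _ Q1.
  have [_ _ _ _ [_ W_le]] := Q_prop _ _ _ _ Q2.
  move: w1N w2N; rewrite !inE /= !andbT => /and4P[zw11 zw21 wz11 wz12] /and4P[zw12 zw22 wz21 wz22].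
  split; [split | exact: codeg | split; exact: ltW | exact: W_le].
  - apply: subseq_uniq uniq11; apply: subseq_trans (suffix_subseq [:: x1; x2] _).
    exact: (cat_subseq (subseq_refl [:: y1; y2; z1; z2; w1; w2]) (subseq_cons _ y2')).
  - by case; case.
  - by case; case.
  - by case; case; rewrite /= e_sym.
apply: le_trans (card_theta_free_le e_sym t_gt0 free _ C_spec) _.
  by rewrite !mulr_ge0 ?powR_ge0 //; apply: le_trans m_ge1.
exact: theta_count_le_g.
Qed.
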